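(* Let $n\ge0$ and let $I$ be one of the sets $\{a^nb,a\}$, $\{a^nb,b\}$, $\{b^na,a\}$, $\{b^na,b\}$, $\{ba^n,a\}$, $\{ba^n,b\}$, $\{ab^n,a\}$, $\{ab^n,b\}$, $\{a^nb,a^n\}$, $\{ba^n,a^n\}$, $\{b^na,b^n\}$, $\{ab^n,b^n\}$. Then $\vdash_I^*$ is a well quasi-order on $L^{\epsilon}_{\vdash_I}$.
   Context: For words $u,v$, the shuffle $u \sqcup\!\sqcup v$ is the set of all words $u_1v_1\cdots u_kv_k$ with $k\ge 1$, $u=u_1\cdots u_k$, $v=v_1\cdots v_k$ (pieces possibly empty). For a finite set $I$ of words, $v \vdash_I w$ means $w \in v \sqcup\!\sqcup u$ for some $u\in I$; $\vdash_I^*$ is its reflexive-transitive closure and $L^{\epsilon}_{\vdash_I}=\{w : \epsilon \vdash_I^* w\}$. A quasi-order $\le$ on $S$ is a well quasi-order iff every infinite sequence $s_1,s_2,\dots$ in $S$ has $i<j$ with $s_i\le s_j$. *)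

From Stdlib Require Import List Arith Relations.
Import ListNotations.

Inductive letter : Type := a | b.
Definition word := list letter.

Definition pw (x : letter) (n : nat) : word := repeat x n.

(* w ∈ u ⧢ v : w = u1 v1 ... uk vk with k >= 1, u = u1...uk, v = v1...vk
   (pieces possibly empty); the list ps is [(u1,v1);...;(uk,vk)]. *)
Definition shuffle (u v w : word) : Prop :=
  exists ps : list (word * word),
    ps <> [] /\
    u = concat (map fst ps) /\
    v = concat (map snd ps) /\
    w = concat (map (fun p => fst p ++ snd p) ps).

Definition step (I : list word) (v w : word) : Prop :=
  exists u, In u I /\ shuffle v u w.

Definition star (I : list word) : word -> word -> Prop :=
  clos_refl_trans word (step I).

Definition Leps (I : list word) (w : word) : Prop := star I [] w.

Definition wqo {X : Type} (S : X -> Prop) (le : X -> X -> Prop) : Prop :=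
  forall s : nat -> X, (forall i, S (s i)) ->
    exists i j, i < j /\ le (s i) (s j).

Definition Isets (n : nat) : list (list word) :=
  [ [pw a n ++ [b]; [a]];
    [pw a n ++ [b]; [b]];
    [pw b n ++ [a]; [a]];
    [pw b n ++ [a]; [b]];
    [[b] ++ pw a n; [a]];
    [[b] ++ pw a n; [b]];
    [[a] ++ pw b n; [a]];
    [[a] ++ pw b n; [b]];
    [pw a n ++ [b]; pw a n];
    [[b] ++ pw a n; pw a n];
    [pw b n ++ [a]; pw b n];
    [[a] ++ pw b n; pw b n] ].

From Stdlib Require Import List Arith Relations Lia ZArith Classical ClassicalEpsilon.
Import ListNotations.

(* Each of the twelve sets is the image of {a^n b, a}, {a b^n, a} or {a^n b, a^n} under letter
   swap, reversal or both, and these maps preserve shuffles.  For the three base sets, reading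
   [a] as a step +al and [b] as a step -be, every word of L is a walk from 0 that stays
   nonnegative and ends at a multiple of d (for suitable al, be, d), since both properties
   survive shuffling.  Conversely every nonempty such walk factors, by cutting at first or last
   passages, as a context c[y_0, ..., y_k] whose empty filling c[eps, ..., eps] is a word of I
   and whose components are again such walks; hence these walks are exactly L,
   each y_i |-^* c[y_0, ..., y_k], and |-^* is monotone in the components.  Nash-Williams'
   minimal bad sequence argument, applied to this recursive decomposition, shows that |-^* is a
   well quasi-order on L. *)

(** * Shuffles *)

Inductive interleave {A : Type} : list A -> list A -> list A -> Prop :=
| interleave_nil : interleave [] [] []
| interleave_left c u v w : interleave u v w -> interleave (c :: u) v (c :: w)
| interleave_right c u v w : interleave u v w -> interleave u (c :: v) (c :: w).

Section Interleave.
Context {A : Type}.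
Implicit Types u v w p q : list A.

Lemma interleave_app u1 v1 w1 u2 v2 w2 :
  interleave u1 v1 w1 -> interleave u2 v2 w2 -> interleave (u1 ++ u2) (v1 ++ v2) (w1 ++ w2).
Proof. intros H H2; induction H; simpl; try constructor; auto. Qed.

Lemma interleave_nil_l v : interleave [] v v.
Proof. induction v; constructor; auto. Qed.

Lemma interleave_nil_r u : interleave u [] u.
Proof. induction u; constructor; auto. Qed.

Lemma interleave_insert u p q : interleave u (p ++ q) (p ++ u ++ q).
Proof.
  pose proof (interleave_app _ _ _ _ _ _ (interleave_nil_l p)
    (interleave_app _ _ _ _ _ _ (interleave_nil_r u) (interleave_nil_l q))) as H.
  now rewrite app_nil_r in H.
Qed.

Lemma interleave_frame u v w p q : interleave u v w -> interleave (p ++ u ++ q) v (p ++ w ++ q).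
Proof.
  intro H.
  pose proof (interleave_app _ _ _ _ _ _ (interleave_nil_r p)
    (interleave_app _ _ _ _ _ _ H (interleave_nil_r q))) as H'.
  now rewrite !app_nil_r in H'.
Qed.

Lemma interleave_rev u v w : interleave u v w -> interleave (rev u) (rev v) (rev w).
Proof.
  induction 1; simpl.
  - constructor.
  - rewrite <- (app_nil_r (rev v)) at 1.
    apply interleave_app; auto. repeat constructor.
  - rewrite <- (app_nil_r (rev u)) at 1.
    apply interleave_app; auto. repeat constructor.
Qed.

Lemma interleave_map {B} (f : A -> B) u v w :
  interleave u v w -> interleave (map f u) (map f v) (map f w).
Proof. induction 1; simpl; constructor; auto. Qed.

End Interleave.

Lemma shuffle_interleave u v w : shuffle u v w <-> interleave u v w.
Proof.
  split.
  - intros [ps [_ [-> [-> ->]]]]. induction ps as [|[x y] ps IH]; simpl.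
    + constructor.
    + rewrite <- !app_assoc.
      apply (interleave_app x [] x); [apply interleave_nil_r|].
      apply (interleave_app [] y y); [apply interleave_nil_l|exact IH].
  - induction 1 as [| c u v w _ [ps [Hne [Hu [Hv Hw]]]] | c u v w _ [ps [Hne [Hu [Hv Hw]]]]].
    + exists [([], [])]; simpl; repeat split; congruence.
    + exists (([c], []) :: ps); simpl; repeat split; subst; congruence.
    + exists (([], [c]) :: ps); simpl; repeat split; subst; congruence.
Qed.

Lemma step_interleave I v w : step I v w <-> exists u, In u I /\ interleave v u w.
Proof.
  split; intros [u [Hu Hs]]; exists u; split; auto; apply shuffle_interleave; auto.
Qed.

Lemma step_insert I y p q : In (p ++ q) I -> step I y (p ++ y ++ q).
Proof. intro H. apply step_interleave. exists (p ++ q). split; auto. apply interleave_insert. Qed.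

Lemma star_frame I u w p q : star I u w -> star I (p ++ u ++ q) (p ++ w ++ q).
Proof.
  induction 1 as [u w H| |]; [|apply rt_refl|eapply rt_trans; eauto].
  apply rt_step, step_interleave. apply step_interleave in H as [v [Hv Hs]].
  exists v; split; auto. apply interleave_frame; auto.
Qed.

Lemma star_app I u u' v v' : star I u u' -> star I v v' -> star I (u ++ v) (u' ++ v').
Proof.
  intros Hu Hv. apply rt_trans with (u' ++ v).
  - exact (star_frame I u u' [] v Hu).
  - pose proof (star_frame I v v' u' [] Hv) as H. now rewrite !app_nil_r in H.
Qed.

Definition preserves_interleave (f : word -> word) :=
  forall u v w, interleave u v w -> interleave (f u) (f v) (f w).

Lemma star_map (f : word -> word) I u w :
  preserves_interleave f -> star I u w -> star (map f I) (f u) (f w).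
Proof.
  intros Hf. induction 1 as [u w H| |]; [|apply rt_refl|eapply rt_trans; eauto].
  apply rt_step, step_interleave. apply step_interleave in H as [v [Hv Hs]].
  exists (f v). split; [apply in_map|apply Hf]; auto.
Qed.

Lemma wqo_map_involution (f : word -> word) I :
  preserves_interleave f -> (forall w, f (f w) = w) -> f [] = [] ->
  wqo (Leps I) (star I) -> wqo (Leps (map f I)) (star (map f I)).
Proof.
  intros Hf Hinv Hnil HI s Hs.
  assert (HfI : map f (map f I) = I).
  { rewrite map_map, (map_ext _ _ Hinv). apply map_id. }
  destruct (HI (fun i => f (s i))) as [i [j [Hij Hle]]].
  - intro i. unfold Leps. rewrite <- HfI, <- Hnil. apply star_map; auto. apply Hs.
  - exists i, j. split; auto. rewrite <- (Hinv (s i)), <- (Hinv (s j)). apply star_map; auto.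
Qed.

(** * Bad sequences and products of well quasi-orders *)

Definition bad {X} (D : X -> Prop) (le : X -> X -> Prop) (f : nat -> X) :=
  (forall i, D (f i)) /\ forall i j, i < j -> ~ le (f i) (f j).

Lemma not_wqo_bad {X} (D : X -> Prop) le : ~ wqo D le -> exists f, bad D le f.
Proof.
  intro H. apply not_all_ex_not in H as [s H]. apply imply_to_and in H as [HD H].
  exists s. split; auto. intros i j Hij Hle. apply H. exists i, j; auto.
Qed.

Lemma ex_min_size {X} (Q : X -> Prop) (size : X -> nat) :
  (exists x, Q x) -> exists x, Q x /\ forall y, Q y -> size x <= size y.
Proof.
  intros [x Hx]. remember (size x) as k. revert x Hx Heqk.
  induction k as [k IH] using (well_founded_induction lt_wf). intros x Hx Hk.
  destruct (classic (forall y, Q y -> size x <= size y)) as [H|H]; [exists x; auto|].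
  apply not_all_ex_not in H as [y H]. apply imply_to_and in H as [Hy H].
  apply (IH (size y)) with y; auto. lia.
Qed.

Lemma increasing_lt (phi : nat -> nat) :
  (forall k, phi k < phi (S k)) -> forall k l, k < l -> phi k < phi l.
Proof.
  intros H k l Hkl. induction Hkl as [|l _ IH]; [apply H|]. specialize (H l). lia.
Qed.

Lemma infinitely_often_subseq (P : nat -> Prop) :
  (forall N, exists i, N <= i /\ P i) ->
  exists phi : nat -> nat, (forall k, phi k < phi (S k)) /\ forall k, P (phi k).
Proof.
  intro H. destruct (choice _ H) as [next Hnext].
  exists (nat_rect _ (next 0) (fun _ r => next (S r))). split.
  - intro k. simpl. destruct (Hnext (S (nat_rect _ (next 0) (fun _ r => next (S r)) k))). lia.
  - intros [|k]; apply Hnext.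
Qed.

Lemma infinitely_often_in_list {T} (l : list T) (t : nat -> T) :
  (forall i, In (t i) l) -> exists g, In g l /\ forall N, exists i, N <= i /\ t i = g.
Proof.
  revert t. induction l as [|g l IH]; intros t Ht; [destruct (Ht 0)|].
  destruct (classic (forall N, exists i, N <= i /\ t i = g)) as [Hinf|Hfin].
  - exists g. split; [left|]; auto.
  - apply not_all_ex_not in Hfin as [N HN].
    destruct (IH (fun i => t (N + i))) as [g' [Hg' Hinf]].
    + intro i. destruct (Ht (N + i)) as [E|]; auto.
      exfalso. apply HN. exists (N + i). split; auto. lia.
    + exists g'. split; [right; auto|]. intro M.
      destruct (Hinf M) as [i [Hi E]]. exists (N + i). split; auto. lia.
Qed.

Section WqoProducts.
Variables (X : Type) (D : X -> Prop) (le : X -> X -> Prop).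
Hypothesis le_trans : forall x y z, le x y -> le y z -> le x z.
Hypothesis D_wqo : wqo D le.

(* An index [i] is terminal when nothing later lies above it; a wqo has only finitely many. *)
Lemma wqo_increasing_subseq (s : nat -> X) : (forall i, D (s i)) ->
  exists phi, (forall k, phi k < phi (S k)) /\
    forall k l, k < l -> le (s (phi k)) (s (phi l)).
Proof.
  intro Hs.
  destruct (classic (forall N, exists i, N <= i /\ forall j, i < j -> ~ le (s i) (s j)))
    as [Hterm|Hfin].
  - exfalso. destruct (infinitely_often_subseq _ Hterm) as [phi [Hphi Ht]].
    destruct (D_wqo (fun k => s (phi k))) as [k [l [Hkl Hle]]]; [auto|].
    apply (Ht k (phi l)); auto. apply increasing_lt; auto.
  - apply not_all_ex_not in Hfin as [N HN].
    assert (Hnext : forall i, exists j, N <= i -> i < j /\ le (s i) (s j)).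
    { intro i. destruct (le_lt_dec N i) as [HNi|]; [|exists 0; lia].
      apply NNPP; intro Hno. apply HN. exists i. split; auto.
      intros j Hij Hle. apply Hno. exists j; auto. }
    destruct (choice _ Hnext) as [next Hnx].
    set (phi := nat_rect (fun _ => nat) N (fun _ r => next r)).
    assert (HN' : forall k, N <= phi k).
    { induction k; simpl; [lia|]. destruct (Hnx _ IHk). unfold phi in *. lia. }
    assert (Hstep : forall k, phi k < phi (S k) /\ le (s (phi k)) (s (phi (S k)))).
    { intro k. apply Hnx, HN'. }
    exists phi. split; [apply Hstep|].
    intros k l Hkl. induction Hkl as [|l _ IH]; [apply Hstep|].
    apply le_trans with (s (phi l)); [exact IH|apply Hstep].
Qed.

Lemma wqo_Forall2 (n : nat) :
  wqo (fun l => length l = n /\ Forall D l) (Forall2 le).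
Proof.
  induction n as [|n IH]; intros s Hs.
  - exists 0, 1. split; auto.
    destruct (Hs 0) as [H0 _], (Hs 1) as [H1 _].
    destruct (s 0), (s 1); try discriminate. constructor.
  - destruct (s 0) as [|x0 l0] eqn:E; [destruct (Hs 0) as [H _]; rewrite E in H; discriminate|].
    assert (Hsplit : forall i, s i = hd x0 (s i) :: tl (s i)).
    { intro i. destruct (Hs i) as [Hl _]. destruct (s i); [discriminate|reflexivity]. }
    assert (Hhd : forall i, D (hd x0 (s i))).
    { intro i. destruct (Hs i) as [_ Hf]. rewrite Hsplit in Hf. inversion Hf; auto. }
    destruct (wqo_increasing_subseq _ Hhd) as [phi [Hphi Hchain]].
    destruct (IH (fun k => tl (s (phi k)))) as [k [l [Hkl Htl]]].
    + intro k. destruct (Hs (phi k)) as [Hl Hf]. rewrite Hsplit in Hl, Hf.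
      inversion Hl. inversion Hf. auto.
    + exists (phi k), (phi l). split; [apply increasing_lt; auto|].
      rewrite (Hsplit (phi k)), (Hsplit (phi l)). constructor; auto.
Qed.

Lemma wqo_tagged {G} (tags : list G) (arity : G -> nat) :
  wqo (fun t : G * list X => In (fst t) tags /\ length (snd t) = arity (fst t) /\ Forall D (snd t))
      (fun t t' => fst t = fst t' /\ Forall2 le (snd t) (snd t')).
Proof.
  intros s Hs.
  destruct (infinitely_often_in_list tags (fun i => fst (s i))) as [g [_ Hinf]].
  { intro i. apply Hs. }
  destruct (infinitely_often_subseq _ Hinf) as [phi [Hphi Hg]].
  destruct (wqo_Forall2 (arity g) (fun k => snd (s (phi k)))) as [k [l [Hkl Hle]]].
  - intro k. destruct (Hs (phi k)) as [_ [Hl Hf]]. rewrite Hg in Hl. auto.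
  - exists (phi k), (phi l). split; [apply increasing_lt; auto|].
    split; auto. now rewrite !Hg.
Qed.

End WqoProducts.

(** * Minimal bad sequences *)

Section MinimalBadSequence.
Variables (X : Type) (D : X -> Prop) (le : X -> X -> Prop) (size : X -> nat).
Hypothesis le_trans : forall x y z, le x y -> le y z -> le x z.

Definition minimal_bad (m : nat -> X) :=
  bad D le m /\
  forall n f, bad D le f -> (forall i, i < n -> f i = m i) -> size (m n) <= size (f n).

(* [m n] is chosen of minimal size among the [n]-th terms of the bad sequences extending
   [prefix n = m 0, ..., m (n-1)]. *)
Lemma minimal_bad_exists : ~ wqo D le -> exists m, minimal_bad m.
Proof.
  intro Hnw. destruct (not_wqo_bad D le Hnw) as [f0 Hf0].
  set (extends n p := exists f, bad D le f /\ forall i, i < n -> f i = p i).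
  set (update (p : nat -> X) n x := fun i => if i <? n then p i else x).
  assert (Hnext : forall np : nat * (nat -> X), exists x, extends (fst np) (snd np) ->
    extends (S (fst np)) (update (snd np) (fst np) x) /\
    forall y, extends (S (fst np)) (update (snd np) (fst np) y) -> size x <= size y).
  { intros [n p]. simpl. destruct (classic (extends n p)) as [[f [Hf Hag]]|Hno].
    - destruct (ex_min_size (fun x => extends (S n) (update p n x)) size) as [x [Hx Hmin]].
      + exists (f n), f. split; auto. intros i Hi. unfold update.
        destruct (Nat.ltb_spec i n); [auto|]. now replace i with n by lia.
      + exists x. auto.
    - exists (f0 0). tauto. }
  destruct (choice _ Hnext) as [next Hnx].
  set (prefix := nat_rect (fun _ => nat -> X) (fun _ => f0 0)
                   (fun n p => update p n (next (n, p)))).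
  set (m n := next (n, prefix n)).
  assert (prefix_m : forall n i, i < n -> prefix n i = m i).
  { induction n as [|n IH]; intros i Hi; [lia|]. simpl. unfold update.
    destruct (Nat.ltb_spec i n); [auto|]. now replace i with n by lia. }
  assert (Hext : forall n, extends n (prefix n)).
  { induction n as [|n IH]; [exists f0; split; auto; lia|]. apply (Hnx (n, prefix n)), IH. }
  assert (Hm : bad D le m).
  { split.
    - intro i. destruct (Hext (S i)) as [f [[HD _] Hag]].
      rewrite <- prefix_m with (n := S i), <- Hag; auto.
    - intros i j Hij. destruct (Hext (S j)) as [f [[_ Hb] Hag]].
      rewrite <- (prefix_m (S j) i), <- (prefix_m (S j) j), <- !Hag; auto; lia. }
  exists m. split; auto. intros n f Hf Hag.
  apply (proj2 (Hnx (n, prefix n) (Hext n)) (f n)). exists f. split; auto.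
  intros i Hi. simpl in *. unfold update. destruct (Nat.ltb_spec i n).
  - rewrite (prefix_m n i); auto.
  - now replace i with n by lia.
Qed.

(* Prepending [m 0, ..., m (i-1)] to a bad sequence of such elements would contradict minimality. *)
Lemma wqo_below_minimal_bad m : minimal_bad m ->
  wqo (fun y => exists i, D y /\ size y < size (m i) /\ le y (m i)) le.
Proof.
  intros [[HmD Hmbad] Hmin]. apply NNPP; intro Hnw.
  destruct (not_wqo_bad _ le Hnw) as [h [Hh Hhbad]].
  set (below ki := D (h (fst ki)) /\ size (h (fst ki)) < size (m (snd ki)) /\
                   le (h (fst ki)) (m (snd ki))).
  destruct (ex_min_size below snd) as [[k0 i0] [[HD0 [Hsz0 _]] Hi0]].
  { destruct (Hh 0) as [i Hi]. exists (0, i). exact Hi. }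
  simpl in *.
  set (f j := if j <? i0 then m j else h (k0 + (j - i0))).
  assert (Hf : bad D le f).
  { split.
    - intro j. unfold f. destruct (Nat.ltb_spec j i0); [auto|].
      destruct (Hh (k0 + (j - i0))) as [i [HD _]]. exact HD.
    - intros j j' Hjj'. unfold f.
      destruct (Nat.ltb_spec j i0), (Nat.ltb_spec j' i0); try lia; auto.
      + intro Hle. destruct (Hh (k0 + (j' - i0))) as [i Hi].
        assert (i0 <= i) by exact (Hi0 (_, i) Hi).
        apply (Hmbad j i); [lia|]. apply le_trans with (1 := Hle), Hi.
      + apply Hhbad. lia. }
  specialize (Hmin i0 f Hf). unfold f in Hmin.
  rewrite Nat.ltb_irrefl, Nat.sub_diag, Nat.add_0_r in Hmin.
  assert (size (m i0) <= size (h k0)); [apply Hmin|lia].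
  intros i Hi. now apply Nat.ltb_lt in Hi as ->.
Qed.

Variables (G : Type) (tags : list G) (arity : G -> nat) (C : G -> list X -> X).
Hypothesis C_mono : forall g ys ys', Forall2 le ys ys' -> le (C g ys) (C g ys').
Hypothesis decompose : forall x, D x -> (forall y, D y -> le x y) \/
  exists g ys, In g tags /\ length ys = arity g /\ x = C g ys /\
    Forall (fun y => D y /\ size y < size x /\ le y x) ys.

Theorem wqo_of_decomposition : wqo D le.
Proof.
  apply NNPP; intro Hnw. destruct (minimal_bad_exists Hnw) as [m Hm].
  set (below y := exists i, D y /\ size y < size (m i) /\ le y (m i)).
  pose proof Hm as [[HmD Hmbad] _].
  assert (Hdec : forall i, exists t : G * list X,
    (In (fst t) tags /\ length (snd t) = arity (fst t) /\ Forall below (snd t)) /\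
    m i = C (fst t) (snd t)).
  { intro i. destruct (decompose (m i) (HmD i)) as [Hbot|[g [ys [Hg [Hl [E Hys]]]]]].
    - exfalso. apply (Hmbad i (S i)); auto.
    - exists (g, ys). repeat split; auto.
      eapply Forall_impl; [|exact Hys]. intros y Hy. exists i. exact Hy. }
  destruct (choice _ Hdec) as [t Ht].
  destruct (wqo_tagged X below le le_trans (wqo_below_minimal_bad m Hm) tags arity t)
    as [i [j [Hij [Hg Hys]]]].
  - intro i. apply Ht.
  - apply (Hmbad i j Hij). rewrite (proj2 (Ht i)), (proj2 (Ht j)), Hg. auto.
Qed.

End MinimalBadSequence.

(** * Contexts *)

Fixpoint join (s : letter) (l : list word) : word :=
  match l with
  | [] => []
  | [y] => y
  | y :: l' => y ++ s :: join s l'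
  end.

Section Join.
Implicit Types (s : letter) (y : word) (l : list word).

Lemma join_cons s y l : l <> [] -> join s (y :: l) = y ++ s :: join s l.
Proof. destruct l; [congruence|reflexivity]. Qed.

Lemma join_snoc s l v : l <> [] -> join s (l ++ [v]) = join s l ++ s :: v.
Proof.
  induction l as [|y l IH]; intro Hl; [congruence|].
  destruct l as [|z l]; [reflexivity|].
  change ((y :: z :: l) ++ [v]) with (y :: ((z :: l) ++ [v])).
  rewrite join_cons, IH, (join_cons s y (z :: l)), <- app_assoc by discriminate.
  reflexivity.
Qed.

Lemma join_app_last s l x y : join s (l ++ [x]) ++ y = join s (l ++ [x ++ y]).
Proof.
  induction l as [|z l IH]; [reflexivity|].
  change ((z :: l) ++ ?t) with (z :: (l ++ t)).
  rewrite !join_cons by (destruct l; discriminate).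
  rewrite <- app_assoc, <- IH. reflexivity.
Qed.

Lemma join_app_join s l1 l2 : l2 <> [] -> join s (l1 ++ [join s l2]) = join s (l1 ++ l2).
Proof.
  intro Hl2. induction l1 as [|y l1 IH]; [reflexivity|].
  change ((y :: l1) ++ ?t) with (y :: (l1 ++ t)).
  rewrite !join_cons, IH; [reflexivity| |];
    intro E; apply app_eq_nil in E as [_ E]; congruence.
Qed.

Lemma join_empty s k : join s (repeat [] (S k)) = repeat s k.
Proof.
  induction k as [|k IH]; [reflexivity|].
  change (repeat [] (S (S k))) with ([] :: repeat (@nil letter) (S k)).
  rewrite join_cons, IH by discriminate. reflexivity.
Qed.

Lemma join_single s i j y :
  join s (repeat [] i ++ y :: repeat [] j) = repeat s i ++ y ++ repeat s j.
Proof.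
  induction i as [|i IH].
  - destruct j as [|j]; [now rewrite app_nil_r|].
    change (join s (y :: repeat [] (S j)) = y ++ repeat s (S j)).
    rewrite join_cons, join_empty by discriminate. reflexivity.
  - change (join s ([] :: (repeat [] i ++ y :: repeat [] j)) = s :: repeat s i ++ y ++ repeat s j).
    rewrite join_cons, IH; [reflexivity|]. destruct i; discriminate.
Qed.

Lemma length_join s l : length (join s l) = length (concat l) + (length l - 1).
Proof.
  induction l as [|y l IH]; [reflexivity|].
  destruct l as [|z l]; [simpl; rewrite app_nil_r; lia|].
  rewrite join_cons by discriminate.
  cbn [concat length] in *. rewrite !length_app in *. cbn [length]. lia.
Qed.

Lemma length_le_concat y l : In y l -> length y <= length (concat l).
Proof.
  intro Hy. induction l as [|z l IH]; [destruct Hy|].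
  simpl. rewrite length_app. destruct Hy as [->|Hy]; [lia|]. specialize (IH Hy). lia.
Qed.

End Join.

Lemma star_join I s ys ys' : Forall2 (star I) ys ys' -> star I (join s ys) (join s ys').
Proof.
  induction 1 as [|y y' ys ys' Hy Hys IH]; [apply rt_refl|].
  destruct Hys as [|z z' zs zs']; [exact Hy|].
  rewrite !join_cons by discriminate.
  apply star_app; [exact Hy|]. apply (star_app I [s] [s]); [apply rt_refl|exact IH].
Qed.

(* The context [pre ++ _ s _ s ... s _ ++ post] with [S (nsep c)] slots separated by [sep c]. *)
Record context := Context { pre : word; sep : letter; post : word; nsep : nat }.

Definition fill (c : context) (ys : list word) : word := pre c ++ join (sep c) ys ++ post c.
Definition pattern (c : context) : word := pre c ++ pw (sep c) (nsep c) ++ post c.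

Lemma fill_empty c : fill c (repeat [] (S (nsep c))) = pattern c.
Proof. unfold fill, pattern. now rewrite join_empty. Qed.

Lemma length_fill c ys :
  length ys = S (nsep c) -> length (fill c ys) = length (concat ys) + length (pattern c).
Proof.
  intro Hl. unfold fill, pattern, pw. rewrite !length_app, length_join, repeat_length, Hl. lia.
Qed.

Lemma star_fill I c ys ys' : Forall2 (star I) ys ys' -> star I (fill c ys) (fill c ys').
Proof.
  intro H. unfold fill. apply star_app; [apply rt_refl|]. apply star_app; [|apply rt_refl].
  apply star_join, H.
Qed.

Lemma Forall2_star_empty I ys : Forall (Leps I) ys -> Forall2 (star I) (repeat [] (length ys)) ys.
Proof. induction 1; constructor; auto. Qed.

(* Inserting [y] into the empty filling [pattern c] is a single step. *)
Lemma star_slot_fill I c ys y : In (pattern c) I -> length ys = S (nsep c) ->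
  Forall (Leps I) ys -> In y ys -> star I y (fill c ys).
Proof.
  intros HI Hl Hys Hy. apply in_split in Hy as [l1 [l2 ->]].
  apply Forall_app in Hys as [Hl1 Hl2]. inversion Hl2 as [|? ? _ Hl2']; subst.
  rewrite length_app in Hl. simpl in Hl.
  apply rt_trans with (fill c (repeat [] (length l1) ++ y :: repeat [] (length l2))).
  - apply rt_step. unfold fill. rewrite join_single.
    replace (pre c ++ (repeat (sep c) (length l1) ++ y ++ repeat (sep c) (length l2)) ++ post c)
      with ((pre c ++ repeat (sep c) (length l1)) ++ y ++ (repeat (sep c) (length l2) ++ post c))
      by now rewrite <- !app_assoc.
    apply step_insert. unfold pattern, pw in HI.
    replace (nsep c) with (length l1 + length l2) in HI by lia.
    rewrite repeat_app, <- !app_assoc in HI. now rewrite <- !app_assoc.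
  - apply star_fill, Forall2_app; [apply Forall2_star_empty; auto|].
    constructor; [apply rt_refl|apply Forall2_star_empty; auto].
Qed.

Section ContextDecomposition.
Variables (I : list word) (P : word -> Prop) (ctxs : list context).
Hypothesis pattern_in : forall c, In c ctxs -> In (pattern c) I.
Hypothesis pattern_nonempty : forall c, In c ctxs -> pattern c <> [].
Hypothesis Leps_P : forall w, Leps I w -> P w.
Hypothesis P_decompose : forall w, P w -> w <> [] ->
  exists c ys, In c ctxs /\ length ys = S (nsep c) /\ w = fill c ys /\ Forall P ys.

Lemma length_slot_lt_fill c ys y :
  In c ctxs -> length ys = S (nsep c) -> In y ys -> length y < length (fill c ys).
Proof.
  intros Hc Hl Hy. rewrite length_fill by exact Hl.
  apply length_le_concat in Hy. specialize (pattern_nonempty c Hc).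
  destruct (pattern c); [congruence|simpl; lia].
Qed.

Lemma P_Leps w : P w -> Leps I w.
Proof.
  induction w as [w IH] using (induction_ltof1 _ (@length letter)). intro Hw.
  destruct w as [|x w']; [apply rt_refl|].
  destruct (P_decompose _ Hw) as [c [ys [Hc [Hl [E Hys]]]]]; [discriminate|].
  rewrite E. apply rt_trans with (fill c (repeat [] (length ys))).
  - apply rt_step, step_interleave. exists (pattern c). split; [auto|].
    rewrite Hl, fill_empty. apply interleave_nil_l.
  - apply star_fill, Forall2_star_empty, Forall_forall. intros y Hy. apply IH.
    + unfold ltof. rewrite E. apply (length_slot_lt_fill c); auto.
    + eapply Forall_forall; eauto.
Qed.

Theorem wqo_of_context_decomposition : wqo (Leps I) (star I).
Proof.
  apply (wqo_of_decomposition word (Leps I) (star I) (@length letter)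
           (@rt_trans _ _) context ctxs (fun c => S (nsep c)) fill).
  - intros c ys ys'. apply star_fill.
  - intros [|x w'] Hw; [left; auto|right].
    destruct (P_decompose _ (Leps_P _ Hw)) as [c [ys [Hc [Hl [E Hys]]]]]; [discriminate|].
    exists c, ys. repeat split; auto. apply Forall_forall. intros y Hy.
    assert (Hy' : Leps I y) by (apply P_Leps; eapply Forall_forall; eauto).
    repeat split; auto; rewrite E.
    + apply (length_slot_lt_fill c); auto.
    + apply star_slot_fill; auto. apply Forall_forall. intros z Hz.
      apply P_Leps. eapply Forall_forall; eauto.
Qed.

End ContextDecomposition.

(** * Weighted walks *)

Open Scope Z_scope.

Definition weight (al be : Z) (c : letter) : Z := match c with a => al | b => - be end.

Fixpoint height (al be : Z) (w : word) : Z :=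
  match w with [] => 0 | c :: w' => weight al be c + height al be w' end.

Fixpoint nonneg_from (al be h : Z) (w : word) : Prop :=
  match w with
  | [] => True
  | c :: w' => 0 <= h + weight al be c /\ nonneg_from al be (h + weight al be c) w'
  end.

Definition walk (al be d : Z) (w : word) : Prop := nonneg_from al be 0 w /\ (d | height al be w).

Section Walks.
Variables al be : Z.

Lemma height_app u v : height al be (u ++ v) = height al be u + height al be v.
Proof. induction u; simpl; lia. Qed.

Lemma height_pw c n : height al be (pw c n) = Z.of_nat n * weight al be c.
Proof. induction n; [reflexivity|]. rewrite Nat2Z.inj_succ. simpl in *. lia. Qed.

Lemma nonneg_from_app u v h :
  nonneg_from al be h (u ++ v) <->
  nonneg_from al be h u /\ nonneg_from al be (h + height al be u) v.
Proof.
  revert h. induction u as [|c u IH]; intro h; simpl.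
  - rewrite Z.add_0_r. tauto.
  - rewrite IH, Z.add_assoc. tauto.
Qed.

Lemma nonneg_from_snoc w c h :
  nonneg_from al be h (w ++ [c]) <->
  nonneg_from al be h w /\ 0 <= h + height al be w + weight al be c.
Proof. rewrite nonneg_from_app. simpl. tauto. Qed.

Lemma nonneg_from_end w h : 0 <= h -> nonneg_from al be h w -> 0 <= h + height al be w.
Proof.
  revert h. induction w as [|c w IH]; intros h Hh Hw; simpl in *; [lia|].
  destruct Hw as [H0 Hw]. specialize (IH _ H0 Hw). lia.
Qed.

Lemma interleave_height u v w :
  interleave u v w -> height al be w = height al be u + height al be v.
Proof. induction 1; simpl; lia. Qed.

Lemma interleave_nonneg_from u v w : interleave u v w -> forall h1 h2, 0 <= h1 -> 0 <= h2 ->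
  nonneg_from al be h1 u -> nonneg_from al be h2 v -> nonneg_from al be (h1 + h2) w.
Proof.
  induction 1 as [|c u v w _ IH|c u v w _ IH]; intros h1 h2 H1 H2 Hu Hv; simpl in *; auto.
  - destruct Hu as [Hc Hu]. split; [lia|].
    replace (h1 + h2 + weight al be c) with (h1 + weight al be c + h2) by lia. auto.
  - destruct Hv as [Hc Hv]. split; [lia|].
    rewrite <- Z.add_assoc. auto.
Qed.

Lemma Leps_walk I d : (forall u, In u I -> walk al be d u) -> forall w, Leps I w -> walk al be d w.
Proof.
  intros HI w Hw. apply clos_rt_rtn1_iff in Hw.
  induction Hw as [|y w Hstep _ [Hy Dy]].
  { split; [constructor|apply Z.divide_0_r]. }
  apply step_interleave in Hstep as [u [Hu Hs]]. destruct (HI u Hu) as [Pu Du]. split.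
  - apply (interleave_nonneg_from _ _ _ Hs 0 0); auto; lia.
  - rewrite (interleave_height _ _ _ Hs). apply Z.divide_add_r; auto.
Qed.

Lemma nonneg_from_pw_a n h : 0 <= al -> 0 <= h -> nonneg_from al be h (pw a n).
Proof. revert h. induction n; intros h Hal Hh; simpl; auto. split; [lia|]. apply IHn; lia. Qed.

Lemma nonneg_from_pw_b n h : 0 <= be -> Z.of_nat n * be <= h -> nonneg_from al be h (pw b n).
Proof.
  revert h. induction n; intros h Hbe Hh; simpl; auto. split; [lia|]. apply IHn; lia.
Qed.

End Walks.

Section LastPassage.
Variable be : Z.
Hypothesis be_ge0 : 0 <= be.

(* Cut [w] at its last [a]-step from height [m] to [m + 1]. *)
Lemma last_passage w m j : 0 <= m -> 0 <= j -> nonneg_from 1 be 0 w -> height 1 be w = m + 1 + j ->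
  exists u v, w = u ++ a :: v /\ nonneg_from 1 be 0 u /\ height 1 be u = m /\
    nonneg_from 1 be 0 v /\ height 1 be v = j.
Proof.
  revert j. induction w as [|c w IH] using rev_ind; intros j Hm Hj Hw Hh; [simpl in Hh; lia|].
  rewrite height_app in Hh. apply nonneg_from_snoc in Hw as [Hw Hc].
  destruct c; simpl in Hh, Hc.
  - destruct (Z.eq_dec j 0) as [->|Hj0]; [exists w, []; repeat split; auto; lia|].
    destruct (IH (j - 1)) as [u [v [-> [Hu [Hhu [Hv Hhv]]]]]]; auto; try lia.
    exists u, (v ++ [a]). rewrite <- app_assoc. repeat split; auto.
    + apply nonneg_from_snoc. simpl. split; auto. lia.
    + rewrite height_app. simpl. lia.
  - destruct (IH (j + be)) as [u [v [-> [Hu [Hhu [Hv Hhv]]]]]]; auto; try lia.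
    exists u, (v ++ [b]). rewrite <- app_assoc. repeat split; auto.
    + apply nonneg_from_snoc. simpl. split; auto. lia.
    + rewrite height_app. simpl. lia.
Qed.

Lemma last_passages (k : nat) w m :
  0 <= m -> nonneg_from 1 be 0 w -> height 1 be w = m + Z.of_nat k ->
  exists y0 ys, length ys = k /\ w = join a (y0 :: ys) /\
    nonneg_from 1 be 0 y0 /\ height 1 be y0 = m /\
    Forall (fun y => nonneg_from 1 be 0 y /\ height 1 be y = 0) ys.
Proof.
  revert w. induction k as [|k IH]; intros w Hm Hw Hh; [exists w, []; repeat split; auto; lia|].
  destruct (last_passage w (m + Z.of_nat k) 0) as [u [v [-> [Hu [Hhu [Hv Hhv]]]]]]; auto; try lia.
  destruct (IH u) as [y0 [ys [Hl [-> [H0 [Hh0 Hys]]]]]]; auto; try lia.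
  exists y0, (ys ++ [v]). repeat split; auto.
  - rewrite length_app. simpl. lia.
  - rewrite app_comm_cons, join_snoc by discriminate. reflexivity.
  - apply Forall_app. auto.
Qed.

End LastPassage.

Lemma walk_snoc_b_factor (n : nat) (d : Z) w :
  walk 1 (Z.of_nat n) d (w ++ [b]) ->
  exists ys, length ys = S n /\ w = join a ys /\ Forall (walk 1 (Z.of_nat n) d) ys.
Proof.
  intros [Hw Hh]. apply nonneg_from_snoc in Hw as [Hw Hb]. simpl in Hb.
  rewrite height_app in Hh. simpl in Hh. rewrite Z.add_0_r in Hh.
  destruct (last_passages (Z.of_nat n) (Nat2Z.is_nonneg n) n w
              (height 1 (Z.of_nat n) w - Z.of_nat n))
    as [y0 [ys [Hl [-> [H0 [Hh0 Hys]]]]]]; auto; try lia.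
  exists (y0 :: ys). repeat split; simpl; auto.
  constructor.
  - split; auto. rewrite Hh0. exact Hh.
  - eapply Forall_impl; [|exact Hys].
    intros y [Hy Hhy]. split; auto. rewrite Hhy. apply Z.divide_0_r.
Qed.

Lemma walk_snoc_a_factor (n : nat) w :
  walk 1 (Z.of_nat n) (Z.of_nat n) (w ++ [a]) -> n <> 0%nat /\
  exists ys, length ys = S n /\ w ++ [a] = join a ys /\
    Forall (walk 1 (Z.of_nat n) (Z.of_nat n)) ys.
Proof.
  intros [Hw Hh].
  assert (Hpos : 1 <= height 1 (Z.of_nat n) (w ++ [a])).
  { apply nonneg_from_app in Hw as [Hw _].
    pose proof (nonneg_from_end _ _ w 0 (Z.le_refl 0) Hw). rewrite height_app. simpl. lia. }
  assert (Hn : n <> 0%nat).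
  { intros ->. apply Z.divide_0_l in Hh. lia. }
  split; auto.
  destruct (last_passages (Z.of_nat n) (Nat2Z.is_nonneg n) n (w ++ [a])
              (height 1 (Z.of_nat n) (w ++ [a]) - Z.of_nat n)) as [y0 [ys [Hl [E [H0 [Hh0 Hys]]]]]];
    auto; [apply Z.le_0_sub, Z.divide_pos_le; [lia|exact Hh] | lia |].
  exists (y0 :: ys). repeat split; simpl; auto. constructor.
  - split; auto. rewrite Hh0. apply Z.divide_sub_r; auto. apply Z.divide_refl.
  - eapply Forall_impl; [|exact Hys].
    intros y [Hy Hhy]. split; auto. rewrite Hhy. apply Z.divide_0_r.
Qed.

Section FirstPassage.
Variable al : Z.
Hypothesis al_ge0 : 0 <= al.

(* Cut [w] at its first [b]-step below [0]. *)
Lemma first_passage w h : 0 <= h -> ~ nonneg_from al 1 h w ->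
  exists v w', w = v ++ b :: w' /\ nonneg_from al 1 h v /\ h + height al 1 v = 0.
Proof.
  revert h. induction w as [|c w IH]; intros h Hh Hw; [destruct Hw; exact I|]. simpl in Hw.
  destruct (Z_lt_le_dec (h + weight al 1 c) 0) as [Hlt|Hge].
  - destruct c; simpl in Hlt; [lia|]. exists [], w. simpl. repeat split; auto. lia.
  - destruct (IH (h + weight al 1 c)) as [v [w' [-> [Hv Hhv]]]]; [auto|tauto|].
    exists (c :: v), w'. simpl. repeat split; auto. lia.
Qed.

Lemma first_passages (d : nat) w : nonneg_from al 1 (Z.of_nat d) w ->
  exists vs t, (length vs <= d)%nat /\ w = join b (vs ++ [t]) /\
    Forall (fun v => nonneg_from al 1 0 v /\ height al 1 v = 0) vs /\
    nonneg_from al 1 0 t /\ height al 1 w = height al 1 t - Z.of_nat (length vs).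
Proof.
  revert w. induction d as [|d IH]; intros w Hw.
  { exists [], w. simpl in *. repeat split; auto; lia. }
  destruct (classic (nonneg_from al 1 0 w)) as [H0|H0].
  { exists [], w. simpl. repeat split; auto; lia. }
  destruct (first_passage w 0 (Z.le_refl 0) H0) as [v [w' [-> [Hv Hhv]]]].
  apply nonneg_from_app in Hw as [_ [_ Hw]]. cbn [weight] in Hw.
  destruct (IH w') as [vs [t [Hl [-> [Hvs [Ht Hh]]]]]].
  { replace (Z.of_nat d) with (Z.of_nat (S d) + height al 1 v + - (1)) by lia. exact Hw. }
  exists (v :: vs), t. repeat split; auto.
  - simpl. lia.
  - rewrite <- app_comm_cons, join_cons; [reflexivity|]. destruct vs; discriminate.
  - rewrite height_app. cbn [height weight length]. rewrite Hh, Nat2Z.inj_succ. lia.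
Qed.

End FirstPassage.

(* Cut [t] at its last [j] [b]-steps; [j < n] guarantees that there are that many. *)
Lemma split_residues (n : nat) t (j : nat) : (j < n)%nat -> nonneg_from (Z.of_nat n) 1 0 t ->
  (Z.of_nat n | height (Z.of_nat n) 1 t + Z.of_nat j) ->
  exists zs z, length zs = j /\ t = join b (zs ++ [z]) /\
    Forall (walk (Z.of_nat n) 1 (Z.of_nat n)) (zs ++ [z]).
Proof.
  revert j. induction t as [|c t IH] using rev_ind; intros j Hj Ht Hd.
  - destruct j as [|j].
    + exists [], []. repeat split; auto. repeat constructor. apply Z.divide_0_r.
    + simpl in Hd. apply Z.divide_pos_le in Hd; lia.
  - apply nonneg_from_snoc in Ht as [Ht Hc]. rewrite height_app in Hd. destruct c; simpl in Hd, Hc.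
    + destruct (IH j Hj Ht) as [zs [z [Hl [-> Hzs]]]].
      { replace (height (Z.of_nat n) 1 t + Z.of_nat j)
          with (height (Z.of_nat n) 1 t + (Z.of_nat n + 0) + Z.of_nat j - Z.of_nat n) by lia.
        apply Z.divide_sub_r; [exact Hd|apply Z.divide_refl]. }
      exists zs, (z ++ [a]). repeat split; auto; [apply join_app_last|].
      apply Forall_app in Hzs as [Hzs Hz]. inversion Hz as [|? ? [Hzn Hzd]]; subst.
      apply Forall_app. split; auto. repeat constructor.
      * apply nonneg_from_snoc. split; auto. simpl.
        pose proof (nonneg_from_end _ _ z 0 (Z.le_refl 0) Hzn). lia.
      * rewrite height_app. simpl. rewrite Z.add_0_r.
        apply Z.divide_add_r; [exact Hzd|apply Z.divide_refl].
    + destruct j as [|j].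
      * exists [], (t ++ [b]). repeat split; auto. repeat constructor.
        -- apply nonneg_from_snoc. split; auto.
        -- rewrite height_app. simpl. rewrite !Z.add_0_r in Hd. exact Hd.
      * destruct (IH j ltac:(lia) Ht) as [zs [z [Hl [-> Hzs]]]].
        { replace (height (Z.of_nat n) 1 t + Z.of_nat j)
            with (height (Z.of_nat n) 1 t + (-1 + 0) + Z.of_nat (S j)) by lia. exact Hd. }
        exists (zs ++ [z]), []. repeat split.
        -- rewrite length_app. simpl. lia.
        -- rewrite (join_snoc b (zs ++ [z]) []); [reflexivity|]. destruct zs; discriminate.
        -- apply Forall_app. split; auto. repeat constructor. apply Z.divide_0_r.
Qed.

Lemma walk_cons_a_factor (n : nat) w : walk (Z.of_nat n) 1 (Z.of_nat n) (a :: w) ->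
  walk (Z.of_nat n) 1 (Z.of_nat n) w \/
  exists ys, length ys = S n /\ w = join b ys /\ Forall (walk (Z.of_nat n) 1 (Z.of_nat n)) ys.
Proof.
  intros [[_ Hw] Hh]. simpl in Hw, Hh.
  destruct (classic (nonneg_from (Z.of_nat n) 1 0 w)) as [H0|H0].
  { left. split; auto. replace (height (Z.of_nat n) 1 w)
      with (Z.of_nat n + height (Z.of_nat n) 1 w - Z.of_nat n) by lia.
    apply Z.divide_sub_r; [exact Hh|apply Z.divide_refl]. }
  right.
  destruct (first_passages (Z.of_nat n) (Nat2Z.is_nonneg n) n w Hw)
    as [vs [t [Hl [-> [Hvs [Ht Hh']]]]]].
  assert (Hvs0 : vs <> []) by (intros ->; contradiction).
  destruct (split_residues n t (n - length vs)) as [zs [z [Hlz [-> Hzs]]]]; auto.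
  { destruct vs; [congruence|simpl in Hl |- *; lia]. }
  { replace (height (Z.of_nat n) 1 t + Z.of_nat (n - length vs))
      with (Z.of_nat n + height (Z.of_nat n) 1 (join b (vs ++ [t]))) by lia.
    exact Hh. }
  exists (vs ++ zs ++ [z]). repeat split.
  - rewrite !length_app. simpl. lia.
  - rewrite join_app_join; [reflexivity|]. destruct zs; discriminate.
  - apply Forall_app. split; auto. eapply Forall_impl; [|exact Hvs].
    intros v [Hv Hhv]. split; auto. rewrite Hhv. apply Z.divide_0_r.
Qed.

Theorem wqo_anb_a (n : nat) : wqo (Leps [pw a n ++ [b]; [a]]) (star [pw a n ++ [b]; [a]]).
Proof.
  apply wqo_of_context_decomposition with
    (P := walk 1 (Z.of_nat n) 1) (ctxs := [Context [] a [b] n; Context [] a [a] 0]).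
  - intros c [<-|[<-|[]]]; simpl; auto.
  - intros c [<-|[<-|[]]]; unfold pattern; simpl; [destruct (pw a n)|]; discriminate.
  - apply Leps_walk. intros u [<-|[<-|[]]]; split; try apply Z.divide_1_l.
    + apply nonneg_from_app. split; [apply nonneg_from_pw_a; lia|].
      rewrite height_pw. simpl. lia.
    + simpl. lia.
  - intros w Hw Hne. destruct (exists_last Hne) as [w' [[] ->]].
    + exists (Context [] a [a] 0), [w']. repeat split; simpl; auto.
      constructor; [|constructor]. split; [|apply Z.divide_1_l].
      apply (nonneg_from_app _ _ w' [a]), Hw.
    + destruct (walk_snoc_b_factor n 1 w' Hw) as [ys [Hl [-> Hys]]].
      exists (Context [] a [b] n), ys. repeat split; simpl; auto.
Qed.

Theorem wqo_anb_an (n : nat) : wqo (Leps [pw a n ++ [b]; pw a n]) (star [pw a n ++ [b]; pw a n]).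
Proof.
  set (ctx_a := match n with O => [] | S _ => [Context [] a [] n] end).
  apply wqo_of_context_decomposition with
    (P := walk 1 (Z.of_nat n) (Z.of_nat n)) (ctxs := Context [] a [b] n :: ctx_a).
  - intros c [<-|Hc]; [simpl; auto|]. destruct n; simpl in Hc; [destruct Hc|].
    destruct Hc as [<-|[]]. unfold pattern. simpl. rewrite app_nil_r. auto.
  - intros c [<-|Hc]; unfold pattern; simpl; [destruct (pw a n); discriminate|].
    destruct n; simpl in Hc; [destruct Hc|]. destruct Hc as [<-|[]]. discriminate.
  - apply Leps_walk. intros u [<-|[<-|[]]]; split.
    + apply nonneg_from_app. split; [apply nonneg_from_pw_a; lia|].
      rewrite height_pw. simpl. lia.
    + rewrite height_app, height_pw. simpl.
      replace (Z.of_nat n * 1 + (- Z.of_nat n + 0)) with 0 by lia. apply Z.divide_0_r.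
    + apply nonneg_from_pw_a; lia.
    + rewrite height_pw. simpl. rewrite Z.mul_1_r. apply Z.divide_refl.
  - intros w Hw Hne. destruct (exists_last Hne) as [w' [[] ->]].
    + destruct (walk_snoc_a_factor n w' Hw) as [Hn [ys [Hl [E Hys]]]].
      exists (Context [] a [] n), ys. repeat split; auto.
      * right. destruct n; [contradiction|]. left. reflexivity.
      * unfold fill. simpl. rewrite app_nil_r. exact E.
    + destruct (walk_snoc_b_factor n (Z.of_nat n) w' Hw) as [ys [Hl [-> Hys]]].
      exists (Context [] a [b] n), ys. repeat split; simpl; auto.
Qed.

Theorem wqo_abn_a (n : nat) : wqo (Leps [[a] ++ pw b n; [a]]) (star [[a] ++ pw b n; [a]]).
Proof.
  apply wqo_of_context_decomposition with
    (P := walk (Z.of_nat n) 1 (Z.of_nat n)) (ctxs := [Context [a] b [] n; Context [a] b [] 0]).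
  - intros c [<-|[<-|[]]]; unfold pattern; simpl; rewrite ?app_nil_r; auto.
  - intros c [<-|[<-|[]]]; discriminate.
  - apply Leps_walk. intros u [<-|[<-|[]]]; split.
    + simpl. split; [lia|]. apply nonneg_from_pw_b; lia.
    + simpl. rewrite height_pw. simpl.
      replace (Z.of_nat n + Z.of_nat n * -1) with 0 by lia. apply Z.divide_0_r.
    + simpl. lia.
    + simpl. rewrite Z.add_0_r. apply Z.divide_refl.
  - intros [|[] w] Hw Hne; [congruence| |destruct Hw as [[Hb _] _]; simpl in Hb; lia].
    destruct (walk_cons_a_factor n w Hw) as [Hw'|[ys [Hl [-> Hys]]]].
    + exists (Context [a] b [] 0), [w]. unfold fill. simpl. rewrite app_nil_r. auto 6.
    + exists (Context [a] b [] n), ys. unfold fill. simpl. rewrite app_nil_r. auto 6.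
Qed.

Close Scope Z_scope.

(** * Symmetries *)

Definition swap (c : letter) : letter := match c with a => b | b => a end.

Lemma map_swap_involutive w : map swap (map swap w) = w.
Proof. induction w as [|[] w IH]; simpl; congruence. Qed.

Lemma rev_pw c n : rev (pw c n) = pw c n.
Proof.
  induction n as [|n IH]; [reflexivity|].
  unfold pw in *. simpl. rewrite IH. change [c] with (repeat c 1).
  now rewrite <- repeat_app, Nat.add_comm.
Qed.

Lemma map_swap_pw c n : map swap (pw c n) = pw (swap c) n.
Proof. apply map_repeat. Qed.

Lemma wqo_swap I :
  wqo (Leps I) (star I) -> wqo (Leps (map (map swap) I)) (star (map (map swap) I)).
Proof.
  apply wqo_map_involution; [|apply map_swap_involutive|reflexivity].
  intros u v w. apply interleave_map.
Qed.

Lemma wqo_rev I :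
  wqo (Leps I) (star I) -> wqo (Leps (map (@rev letter) I)) (star (map (@rev letter) I)).
Proof.
  apply wqo_map_involution; [|apply rev_involutive|reflexivity].
  intros u v w. apply interleave_rev.
Qed.

Lemma wqo_rev_swap I : wqo (Leps I) (star I) ->
  wqo (Leps (map (fun w => map swap (rev w)) I)) (star (map (fun w => map swap (rev w)) I)).
Proof.
  apply wqo_map_involution; [|intro w|reflexivity].
  - intros u v w Huvw. apply interleave_map, interleave_rev, Huvw.
  - now rewrite <- map_rev, rev_involutive, map_swap_involutive.
Qed.

Ltac image_of_base :=
  simpl; rewrite ?rev_app_distr, ?map_app, ?rev_pw, ?map_swap_pw; reflexivity.

Theorem proposition6 (n : nat) (I : list word) :
  In I (Isets n) -> wqo (Leps I) (star I).
Proof.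
  intro H. unfold Isets in H.
  repeat (destruct H as [<-|H]); [| | | | | | | | | | | |destruct H].
  - apply wqo_anb_a.
  - replace [pw a n ++ [b]; [b]] with (map (fun w => map swap (rev w)) [[a] ++ pw b n; [a]])
      by image_of_base. apply wqo_rev_swap, wqo_abn_a.
  - replace [pw b n ++ [a]; [a]] with (map (@rev letter) [[a] ++ pw b n; [a]])
      by image_of_base. apply wqo_rev, wqo_abn_a.
  - replace [pw b n ++ [a]; [b]] with (map (map swap) [pw a n ++ [b]; [a]])
      by image_of_base. apply wqo_swap, wqo_anb_a.
  - replace [[b] ++ pw a n; [a]] with (map (@rev letter) [pw a n ++ [b]; [a]])
      by image_of_base. apply wqo_rev, wqo_anb_a.
  - replace [[b] ++ pw a n; [b]] with (map (map swap) [[a] ++ pw b n; [a]])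
      by image_of_base. apply wqo_swap, wqo_abn_a.
  - apply wqo_abn_a.
  - replace [[a] ++ pw b n; [b]] with (map (fun w => map swap (rev w)) [pw a n ++ [b]; [a]])
      by image_of_base. apply wqo_rev_swap, wqo_anb_a.
  - apply wqo_anb_an.
  - replace [[b] ++ pw a n; pw a n] with (map (@rev letter) [pw a n ++ [b]; pw a n])
      by image_of_base. apply wqo_rev, wqo_anb_an.
  - replace [pw b n ++ [a]; pw b n] with (map (map swap) [pw a n ++ [b]; pw a n])
      by image_of_base. apply wqo_swap, wqo_anb_an.
  - replace [[a] ++ pw b n; pw b n] with (map (fun w => map swap (rev w)) [pw a n ++ [b]; pw a n])
      by image_of_base. apply wqo_rev_swap, wqo_anb_an.
Qed.
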